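(* Let $\mathcal{M}$, $\mathcal{N}$ be $\Bbbk$-linear categories admitting small coproducts and $F:\mathcal{M}\to\mathcal{N}$ a linear functor such that $\widehat{F}_{X,M}$ is invertible for all $X\in\mathbf{Vec}$, $M\in\mathcal{M}$. Then $F$ preserves small coproducts if one of the following holds: (1) $\mathcal{M}$ and $\mathcal{N}$ are abelian and $F$ is right exact; (2) $\mathcal{M}$ and $\mathcal{N}$ are Ab4 abelian categories and $F$ is left exact.
   Context: A linear category is a category enriched over $\mathbf{Vec}$. In a linear category with small coproducts, the copower $X\otimes M$ ($X\in\mathbf{Vec}$) represents $\mathrm{Hom}_\Bbbk(X,\mathrm{Hom}(M,-))$, with $\Bbbk\otimes M=M$; for $x\in X$, $\underline{x}:\Bbbk\to X$ is $1\mapsto x$. For a linear functor $F$, $\widehat{F}_{X,M}:X\otimes F(M)\to F(X\otimes M)$ is the morphism corresponding under $\mathrm{Hom}(X\otimes F(M),F(X\otimes M))\cong\mathrm{Hom}_\Bbbk(X,\mathrm{Hom}(F(M),F(X\otimes M)))$ to $x\mapsto F(\underline{x}\otimes\mathrm{id}_M)$. An abelian category is Ab4 if it has small coproducts and coproducts are exact. *)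

From HB Require Import structures.
From mathcomp Require Import all_boot all_order all_algebra.
Set Implicit Arguments. Unset Strict Implicit. Unset Printing Implicit Defensive.
Import GRing.Theory.
Local Open Scope ring_scope.

Record linCat (k : fieldType) := LinCat {
  Obj : Type;
  Hom : Obj -> Obj -> lmodType k;
  comp : forall A B C : Obj, Hom B C -> Hom A B -> Hom A C;
  idm : forall A : Obj, Hom A A;
  compA : forall A B C D (h : Hom C D) (g : Hom B C) (f : Hom A B),
      comp h (comp g f) = comp (comp h g) f;
  comp1l : forall A B (f : Hom A B), comp (idm B) f = f;
  comp1r : forall A B (f : Hom A B), comp f (idm A) = f;
  comp_linl : forall A B C (a : k) (f g : Hom B C) (h : Hom A B),
      comp (a *: f + g) h = a *: comp f h + comp g h;
  comp_linr : forall A B C (a : k) (h : Hom B C) (f g : Hom A B),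
      comp h (a *: f + g) = a *: comp h f + comp h g
}.
Arguments Obj {k}.
Arguments Hom {k} l.
Arguments comp {k l A B C}.
Arguments idm {k l}.

Record linFunctor (k : fieldType) (M N : linCat k) := LinFunctor {
  Fo : Obj M -> Obj N;
  Fm : forall A B : Obj M, Hom M A B -> Hom N (Fo A) (Fo B);
  Fm_comp : forall A B C (g : Hom M B C) (f : Hom M A B),
      Fm (comp g f) = comp (Fm g) (Fm f);
  Fm_id : forall A, Fm (idm A) = idm (Fo A);
  Fm_lin : forall A B (a : k) (f g : Hom M A B), Fm (a *: f + g) = a *: Fm f + Fm g
}.
Arguments Fo {k M N}.
Arguments Fm {k M N} l {A B}.

Section Cat.
Variables (k : fieldType) (C : linCat k).

Definition is_iso (A B : Obj C) (f : Hom C A B) : Prop :=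
  exists g : Hom C B A, comp g f = idm A /\ comp f g = idm B.

Definition is_mono (A B : Obj C) (f : Hom C A B) : Prop :=
  forall D (g h : Hom C D A), comp f g = comp f h -> g = h.

Definition is_epi (A B : Obj C) (f : Hom C A B) : Prop :=
  forall D (g h : Hom C B D), comp g f = comp h f -> g = h.

Definition is_coproduct (I : Type) (A : I -> Obj C) (P : Obj C)
    (inj : forall i, Hom C (A i) P) : Prop :=
  forall (D : Obj C) (f : forall i, Hom C (A i) D),
    exists! u : Hom C P D, forall i, comp u (inj i) = f i.

Definition is_product (I : Type) (A : I -> Obj C) (P : Obj C)
    (pr : forall i, Hom C P (A i)) : Prop :=
  forall (D : Obj C) (f : forall i, Hom C D (A i)),
    exists! u : Hom C D P, forall i, comp (pr i) u = f i.

Definition has_small_coproducts : Prop :=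
  forall (I : Type) (A : I -> Obj C), exists (P : Obj C) (inj : forall i, Hom C (A i) P), is_coproduct inj.

Definition is_zero_object (Z : Obj C) : Prop :=
  (forall A (f g : Hom C Z A), f = g) /\ (forall A (f g : Hom C A Z), f = g).

Definition is_kernel (A B : Obj C) (f : Hom C A B) (K : Obj C) (i : Hom C K A) : Prop :=
  comp f i = 0 /\
  forall D (g : Hom C D A), comp f g = 0 -> exists! u : Hom C D K, comp i u = g.

Definition is_cokernel (A B : Obj C) (f : Hom C A B) (Q : Obj C) (q : Hom C B Q) : Prop :=
  comp q f = 0 /\
  forall D (g : Hom C B D), comp g f = 0 -> exists! u : Hom C Q D, comp u q = g.

Definition is_abelian : Prop :=
  (exists Z, is_zero_object Z) /\
  (forall A : bool -> Obj C, exists (P : Obj C) (pr : forall i, Hom C P (A i)), is_product pr) /\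
  (forall A : bool -> Obj C, exists (P : Obj C) (inj : forall i, Hom C (A i) P), is_coproduct inj) /\
  (forall A B (f : Hom C A B), exists (K : Obj C) (i : Hom C K A), is_kernel f i) /\
  (forall A B (f : Hom C A B), exists (Q : Obj C) (q : Hom C B Q), is_cokernel f q) /\
  (forall A B (f : Hom C A B), is_mono f ->
     exists D (g : Hom C B D), is_kernel g f) /\
  (forall A B (f : Hom C A B), is_epi f ->
     exists D (g : Hom C D A), is_cokernel g f).

(* Grothendieck's AB4: abelian, small coproducts exist, and coproducts are
   exact, i.e. a coproduct of monomorphisms is a monomorphism. *)
Definition is_Ab4 : Prop :=
  [/\ is_abelian, has_small_coproducts &
      forall (I : Type) (A B : I -> Obj C) (f : forall i, Hom C (A i) (B i))
             PA (iA : forall i, Hom C (A i) PA) PB (iB : forall i, Hom C (B i) PB)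
             (u : Hom C PA PB),
        is_coproduct iA -> is_coproduct iB ->
        (forall i, is_mono (f i)) ->
        (forall i, comp u (iA i) = comp (iB i) (f i)) ->
        is_mono u].

Definition islinear (X Y : lmodType k) (f : X -> Y) : Prop :=
  forall (a : k) (x y : X), f (a *: x + y) = a *: f x + f y.

(* (P, eta) is a copower X (x) M: P represents Hom_k(X, Hom(M, -)) with
   universal element eta : X -> Hom(M, P) (eta x = underline(x) (x) id_M,
   using k (x) M = M). *)
Definition is_copower (X : lmodType k) (M P : Obj C) (eta : X -> Hom C M P) : Prop :=
  islinear eta /\
  forall (N : Obj C) (phi : X -> Hom C M N), islinear phi ->
    exists! g : Hom C P N, forall x, comp g (eta x) = phi x.

End Cat.

Section Fun.
Variables (k : fieldType) (M N : linCat k) (F : linFunctor M N).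

(* hat F_{X,M} is invertible for all X, M: for any copowers P = X (x) M in M
   and Q = X (x) F(M) in N, the morphism Q -> F(P) corresponding to
   x |-> F(underline(x) (x) id_M) is an isomorphism. *)
Definition hatF_invertible : Prop :=
  forall (X : lmodType k) (A : Obj M) (P : Obj M) (eta : X -> Hom M A P)
         (Q : Obj N) (theta : X -> Hom N (Fo F A) Q) (g : Hom N Q (Fo F P)),
    is_copower eta -> is_copower theta ->
    (forall x, comp g (theta x) = Fm F (eta x)) ->
    is_iso g.

Definition preserves_small_coproducts : Prop :=
  forall (I : Type) (A : I -> Obj M) (P : Obj M) (inj : forall i, Hom M (A i) P),
    is_coproduct inj -> is_coproduct (fun i => Fm F (inj i)).

Definition right_exact : Prop :=
  forall A B (f : Hom M A B) Q (q : Hom M B Q),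
    is_cokernel f q -> is_cokernel (Fm F f) (Fm F q).

Definition left_exact : Prop :=
  forall A B (f : Hom M A B) K (i : Hom M K A),
    is_kernel f i -> is_kernel (Fm F f) (Fm F i).

End Fun.

(* Let P be a coproduct of a family
   A_i with injections inj_i.  In a linear category each inj_i is a split
   mono: its retraction p_i is induced by the maps A_l -> A_i that are the
   identity for l = i and 0 otherwise.  Hence P is a retract of the copower
   Q = k^(I) (x) P, the coproduct of I copies of P, via s : P -> Q and
   r : Q -> P with s inj_i = j_i inj_i and r j_i = inj_i p_i.  Invertibility
   of hat F says that F preserves the coproduct Q, and a functor preserving
   the coproduct Q preserves its retract P. *)
From Pilot Require Import Defs.
From mathcomp Require Import all_boot all_order all_algebra.
From mathcomp Require Import finmap boolp.
From mathcomp.multinomials Require Import monalg.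
Import Pilot.Defs.
Set Implicit Arguments. Unset Strict Implicit. Unset Printing Implicit Defensive.
Import GRing.Theory.
Local Open Scope fset_scope.
Local Open Scope ring_scope.

Section Islinear.
Variables (k : fieldType) (X Y : lmodType k) (f : X -> Y).
Hypothesis f_lin : islinear f.

Lemma islinear0 : f 0 = 0.
Proof.
have := f_lin 1 0 0; rewrite !scale1r addr0 => e.
by apply: (addrI (f 0)); rewrite addr0 -e.
Qed.

Lemma islinearD (x y : X) : f (x + y) = f x + f y.
Proof. by have := f_lin 1 x y; rewrite !scale1r. Qed.

Lemma islinearZ a (x : X) : f (a *: x) = a *: f x.
Proof. by have := f_lin a x 0; rewrite addr0 islinear0 addr0. Qed.

Lemma islinear_sum (T : Type) (s : seq T) (G : T -> X) :
  f (\sum_(i <- s) G i) = \sum_(i <- s) f (G i).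
Proof.
elim: s => [|a s IH]; first by rewrite !big_nil islinear0.
by rewrite !big_cons islinearD IH.
Qed.

End Islinear.

Section Coproducts.
Variables (k : fieldType) (C : linCat k).

Lemma islinear_compr (A B D : Obj C) (h : Hom C B D) :
  islinear (fun f : Hom C A B => comp h f).
Proof. by move=> a f g; rewrite comp_linr. Qed.

Lemma coproduct_hom_ext (I : Type) (A : I -> Obj C) P
    (inj : forall i, Hom C (A i) P) D (u1 u2 : Hom C P D) :
  is_coproduct inj -> (forall i, comp u1 (inj i) = comp u2 (inj i)) -> u1 = u2.
Proof.
move=> inj_cop e; have [w [_ w_uniq]] := inj_cop D (fun i => comp u2 (inj i)).
by rewrite -(w_uniq u1 e) -(w_uniq u2 (fun i => erefl)).
Qed.

Lemma iso_coproduct (I : Type) (A : I -> Obj C) P (inj : forall i, Hom C (A i) P)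
    P' (g : Hom C P P') (inj' : forall i, Hom C (A i) P') :
  is_coproduct inj -> is_iso g -> (forall i, comp g (inj i) = inj' i) ->
  is_coproduct inj'.
Proof.
move=> inj_cop [h [hg gh]] ginj D f.
have [w [w_inj w_uniq]] := inj_cop D f.
exists (comp w h); split=> [i|u' u'_inj].
  by rewrite -ginj compA -(compA w) hg comp1r.
have -> : w = comp u' g by apply: w_uniq => i; rewrite -compA ginj.
by rewrite -compA gh comp1r.
Qed.

Definition delta_hom (I : Type) (A : I -> Obj C) (i l : I) : Hom C (A l) (A i) :=
  match pselect (l = i) with
  | left e => eq_rect l (fun m => Hom C (A l) (A m)) (idm (A l)) i e
  | right _ => 0
  end.

Lemma delta_hom_id (I : Type) (A : I -> Obj C) (i : I) :
  delta_hom A i i = idm (A i).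
Proof. by rewrite /delta_hom; case: pselect => // e; rewrite (Prop_irrelevance e erefl). Qed.

Lemma coproduct_retractions (I : Type) (A : I -> Obj C) P
    (inj : forall i, Hom C (A i) P) :
  is_coproduct inj ->
  exists p : forall i, Hom C P (A i), forall i, comp (p i) (inj i) = idm (A i).
Proof.
move=> inj_cop.
exists (fun i => proj1_sig (cid (inj_cop (A i) (delta_hom A i)))) => i.
by case: cid => /= p [p_inj _]; rewrite p_inj delta_hom_id.
Qed.

Section CoproductCopower.
Variables (I : Type) (B Q : Obj C) (j : I -> Hom C B Q).
Hypothesis j_cop : is_coproduct (A := fun _ => B) j.

(* The free vector space k^(I) on I, realized as finitely supported
   functions, with the basis vector of i written << 1 *g i >>. *)
Definition coproduct_eta (x : {malg k[{classic I}]}) : Hom C B Q :=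
  \sum_(i <- msupp x) x@_i *: j i.

Lemma coproduct_eta_fsubset x (d : {fset {classic I}}) : msupp x `<=` d ->
  coproduct_eta x = \sum_(i <- d) x@_i *: j i.
Proof.
move=> sub; apply: big_fset_incl => // i _ ni.
by rewrite mcoeff_outdom // scale0r.
Qed.

Lemma islinear_coproduct_eta : islinear coproduct_eta.
Proof.
move=> a x y; set d := msupp x `|` msupp y.
have dx : msupp x `<=` d by apply: fsubsetUl.
have dy : msupp y `<=` d by apply: fsubsetUr.
have dxy : msupp (a *: x + y) `<=` d.
  by apply: fsubset_trans (msuppD_le _ _) _; apply: fsetUSS => //; apply: msuppZ_le.
rewrite (coproduct_eta_fsubset dx) (coproduct_eta_fsubset dy).
rewrite (coproduct_eta_fsubset dxy) scaler_sumr -big_split /=.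
by apply: eq_bigr => i _; rewrite mcoeffD mcoeffZ scalerDl scalerA.
Qed.

Lemma coproduct_eta_basis (i : I) :
  coproduct_eta << (1 : k) *g (i : {classic I}) >> = j i.
Proof. by rewrite /coproduct_eta msuppU oner_eq0 big_seq_fset1 mcoeffUU scale1r. Qed.

Lemma coproduct_is_copower : is_copower coproduct_eta.
Proof.
split=> [|D phi phi_lin]; first exact: islinear_coproduct_eta.
have [g [g_j g_uniq]] := j_cop (fun i => phi << (1 : k) *g (i : {classic I}) >>).
exists g; split=> [x|g' g'_eta]; last by apply: g_uniq => i; rewrite -coproduct_eta_basis.
rewrite /coproduct_eta (islinear_sum (islinear_compr g)).
rewrite {3}(monalgE x) (islinear_sum phi_lin); apply: eq_bigr => i _.
rewrite (islinearZ (islinear_compr g)) g_j -(islinearZ phi_lin); congr (phi _).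
by apply/malgP => l; rewrite mcoeffZ !mcoeffU mulr_natr.
Qed.

End CoproductCopower.
End Coproducts.

Section Functor.
Variables (k : fieldType) (M N : linCat k) (F : linFunctor M N).

Lemma Fm_coproduct_eta (I : Type) (B Q : Obj M) (j : I -> Hom M B Q)
    (Q' : Obj N) (j' : I -> Hom N (Fo F B) Q') (g : Hom N Q' (Fo F Q)) :
  (forall i, comp g (j' i) = Fm F (j i)) ->
  forall x, comp g (coproduct_eta j' x) = Fm F (coproduct_eta j x).
Proof.
move=> gj' x; rewrite /coproduct_eta (islinear_sum (islinear_compr g)).
rewrite (islinear_sum (@Fm_lin _ _ _ F _ _)); apply: eq_bigr => i _.
by rewrite (islinearZ (islinear_compr g)) (islinearZ (@Fm_lin _ _ _ F _ _)) gj'.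
Qed.

Lemma hatF_preserves_copower_coproduct (I : Type) (B Q : Obj M)
    (j : I -> Hom M B Q) :
  has_small_coproducts N -> hatF_invertible F ->
  is_coproduct (A := fun _ => B) j -> is_coproduct (A := fun _ => Fo F B) (fun i => Fm F (j i)).
Proof.
move=> hN hF j_cop.
have [Q' [j' j'_cop]] := hN I (fun _ => Fo F B).
have [g [gj' _]] := j'_cop (Fo F Q) (fun i => Fm F (j i)).
apply: (iso_coproduct j'_cop _ gj').
exact: hF (coproduct_is_copower j_cop) (coproduct_is_copower j'_cop) (Fm_coproduct_eta gj').
Qed.

Lemma preserves_coproduct_retract (I : Type) (A : I -> Obj M) P
    (inj : forall i, Hom M (A i) P) (p : forall i, Hom M P (A i))
    Q (j : I -> Hom M P Q) :
  is_coproduct inj -> (forall i, comp (p i) (inj i) = idm (A i)) ->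
  is_coproduct (A := fun _ => P) j ->
  is_coproduct (A := fun _ => Fo F P) (fun i => Fm F (j i)) ->
  is_coproduct (fun i => Fm F (inj i)).
Proof.
move=> inj_cop p_inj j_cop Fj_cop D f.
have [s [s_inj _]] := inj_cop Q (fun i => comp (j i) (inj i)).
have [r [r_j _]] := j_cop P (fun i => comp (inj i) (p i)).
have rs : comp r s = idm P.
  apply: (coproduct_hom_ext inj_cop) => i.
  by rewrite -compA s_inj compA r_j -compA p_inj comp1r comp1l.
have [v [v_Fj _]] := Fj_cop D (fun i => comp (f i) (Fm F (p i))).
exists (comp v (Fm F s)); split=> [i|u' u'_Finj].
  by rewrite -compA -Fm_comp s_inj Fm_comp compA v_Fj -compA -Fm_comp p_inj Fm_id comp1r.
have u'r : comp u' (Fm F r) = v.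
  apply: (coproduct_hom_ext Fj_cop) => i.
  by rewrite v_Fj -compA -Fm_comp r_j Fm_comp compA u'_Finj.
by rewrite -u'r -compA -Fm_comp rs Fm_id comp1r.
Qed.

End Functor.

Theorem lemma2p6 (k : fieldType) (M N : linCat k) (F : linFunctor M N) :
  has_small_coproducts M -> has_small_coproducts N ->
  hatF_invertible F ->
  ((is_abelian M /\ is_abelian N /\ right_exact F) \/
   (is_Ab4 M /\ is_Ab4 N /\ left_exact F)) ->
  preserves_small_coproducts F.
Proof.
move=> hM hN hF _ I A P inj inj_cop.
have [p p_inj] := coproduct_retractions inj_cop.
have [Q [j j_cop]] := hM I (fun _ => P).
apply: (preserves_coproduct_retract inj_cop p_inj j_cop).
exact: hatF_preserves_copower_coproduct hN hF j_cop.
Qed.
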